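(* Let $X$ be a real reflexive Banach space and let $h\in\mathcal{H}$ satisfy $h^{\ast}\circ i\le h$. Assume that $\mathrm{dom}(h)=\mathrm{dom}(h^{\ast}\circ i)$. Then $(\mathcal{A}^{\infty}h)^{\ast}\circ i=\mathcal{A}^{\infty}h$.
   Context: $X^{\ast}$ is the dual of $X$ with pairing $\langle\cdot,\cdot\rangle$. The dual of $X\times X^{\ast}$ is identified with $X^{\ast}\times X$ via $\langle (x,x^{\ast}),(y^{\ast},y)\rangle=\langle x,y^{\ast}\rangle+\langle y,x^{\ast}\rangle$; for $g:X\times X^{\ast}\to\mathbb{R}\cup\{+\infty\}$, $g^{\ast}(y^{\ast},y)=\sup_{(x,x^{\ast})}\{\langle x,y^{\ast}\rangle+\langle y,x^{\ast}\rangle-g(x,x^{\ast})\}$, and $i(x,x^{\ast})=(x^{\ast},x)$. For a maximally monotone $T:X\rightrightarrows X^{\ast}$, $\mathcal{H}(T)$ is the family of lower semicontinuous convex functions $h:X\times X^{\ast}\to\mathbb{R}\cup\{+\infty\}$ with $h(x,x^{\ast})\ge\langle x,x^{\ast}\rangle$ everywhere and $h(x,x^{\ast})=\langle x,x^{\ast}\rangle$ whenever $x^{\ast}\in T(x)$; $\mathcal{H}$ is the union of $\mathcal{H}(T)$ over all maximally monotone $T$. $\mathcal{A}h:=\tfrac12(h+h^{\ast}\circ i)$, $\mathcal{A}^n$ is its $n$-th iterate, and $\mathcal{A}^{\infty}h$ is the pointwise limit (equivalently infimum) of the pointwise non-increasing sequence $\{\mathcal{A}^n h\}_{n\ge1}$.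 $\mathrm{dom}(g)=\{z:g(z)<+\infty\}$. *)

From HB Require Import structures.
From mathcomp Require Import all_boot all_order all_algebra.
From mathcomp Require Import all_classical all_reals all_analysis.
Set Implicit Arguments. Unset Strict Implicit. Unset Printing Implicit Defensive.
Import Order.TTheory GRing.Theory Num.Theory.
Import numFieldNormedType.Exports.
Local Open Scope classical_set_scope.
Local Open Scope ring_scope.

Section Defs.
Context {R : realType} {X : normedModType R}.

Definition is_dual (f : X -> R) : Prop :=
  (forall (a : R) (x y : X), f (a *: x + y) = a * f x + f y) /\ continuous f.

Definition dnorm (f : X -> R) : R :=
  fine (ereal_sup [set (`|f x|)%:E | x in [set x : X | `|x| <= 1]]).

Definition is_bidual (phi : (X -> R) -> R) : Prop :=
  (forall (a : R) (f g : X -> R), is_dual f -> is_dual g ->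
     phi (fun x => a * f x + g x) = a * phi f + phi g) /\
  (exists C : R, forall f, is_dual f -> `|phi f| <= C * dnorm f).

Definition reflexive_space : Prop :=
  forall phi, is_bidual phi -> exists x : X, forall f, is_dual f -> phi f = f x.

(* Functions on X x X^* are represented as X -> (X -> R) -> \bar R; only
   their values at pairs (x, x^* ) with is_dual x^* matter. *)
Definition conj_i (g : X -> (X -> R) -> \bar R) : X -> (X -> R) -> \bar R :=
  (* (g^* o i)(y, y^* ) = g^*(y^*, y)
       = sup_{(x,x^* ) in X x X^*} <x,y^*> + <y,x^*> - g(x,x^* ) *)
  fun y ystar => ereal_sup [set z | exists (x : X) (xstar : X -> R),
        is_dual xstar /\ z = ((ystar x + xstar y)%:E - g x xstar)%E].

(* Lower semicontinuity on X x X^* for the norm (product) topology,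
   written sequentially (X x X^* is a metric space). *)
Definition lsc_XXs (g : X -> (X -> R) -> \bar R) : Prop :=
  forall (x : X) (f : X -> R) (u : nat -> X) (v : nat -> X -> R),
    is_dual f -> (forall n, is_dual (v n)) ->
    u @ \oo --> x ->
    (fun n => dnorm (fun y => v n y - f y)) @ \oo --> (0 : R) ->
    (g x f <= limn_einf (fun n => g (u n) (v n)))%E.

Definition convex_XXs (g : X -> (X -> R) -> \bar R) : Prop :=
  forall (x1 x2 : X) (f1 f2 : X -> R) (t : R),
    is_dual f1 -> is_dual f2 -> 0 <= t <= 1 ->
    (g (t *: x1 + (1 - t) *: x2)%R (fun y => t * f1 y + (1 - t) * f2 y)%R
      <= t%:E * g x1 f1 + (1 - t)%R%:E * g x2 f2)%E.

Definition is_operator (T : X -> set (X -> R)) : Prop :=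
  forall x f, T x f -> is_dual f.

Definition monotone_op (T : X -> set (X -> R)) : Prop :=
  is_operator T /\
  forall x y f g, T x f -> T y g -> 0 <= f x - f y - g x + g y.

Definition max_monotone (T : X -> set (X -> R)) : Prop :=
  monotone_op T /\
  forall S : X -> set (X -> R), monotone_op S ->
    (forall x, T x `<=` S x) -> S = T.

Definition in_HT (T : X -> set (X -> R)) (h : X -> (X -> R) -> \bar R) : Prop :=
  lsc_XXs h /\ convex_XXs h /\
  (forall x f, is_dual f -> ((f x)%:E <= h x f)%E) /\
  (forall x f, T x f -> h x f = (f x)%:E).

Definition in_H (h : X -> (X -> R) -> \bar R) : Prop :=
  exists T, max_monotone T /\ in_HT T h.

Definition opA (h : X -> (X -> R) -> \bar R) : X -> (X -> R) -> \bar R :=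
  fun x f => ((2^-1)%:E * (h x f + conj_i h x f))%E.

Definition opAinf (h : X -> (X -> R) -> \bar R) : X -> (X -> R) -> \bar R :=
  fun x f => ereal_inf [set iter n.+1 opA h x f | n in [set: nat]].

End Defs.

(* Write h_n := A^n h.  By induction h_n^* o i <= h_n <= h, so h_n decreases and
   h_n^* o i increases in n, and every h_m^* o i lies below A^oo h; since g^** <= g
   this gives (A^oo h)^* o i <= A^oo h.  Conversely, where h is finite all these
   values are finite and the gap at least halves at each step:
   h_{n+1} - h_{n+1}^* o i <= h_{n+1} - h_n^* o i = (h_n - h_n^* o i)/2, hence
   A^oo h <= h_n <= (A^oo h)^* o i + 2^-n (h - h^* o i).  Where h = +oo, the domain
   hypothesis makes h^* o i, hence (A^oo h)^* o i, infinite too.  From h \in H only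
   h^* o i > -oo is needed (bound it below at a point of the graph of T). *)
From mathcomp Require Import all_boot all_order all_algebra.
From mathcomp Require Import all_classical all_reals all_analysis.
From mathcomp Require Import lra.
Import Order.TTheory GRing.Theory Num.Theory.
Import numFieldNormedType.Exports.
Local Open Scope classical_set_scope.
Local Open Scope ring_scope.

Section HalvingGap.
Context {R : realFieldType}.

Lemma halving_gap_le {a b : nat -> R} :
  (forall n, a n.+1 = 2^-1 * (a n + b n)) -> nondecreasing_seq b ->
  forall n, (a n - b n) * 2 ^+ n <= a 0%N - b 0%N.
Proof.
move=> a_rec b_nondecr; elim=> [|n IHn]; first by rewrite expr0 mulr1.
have b_le := b_nondecr _ _ (leqnSn n).
have pow_gt0 : 0 < (2 : R) ^+ n by exact: exprn_gt0.
move: IHn (a_rec n); rewrite exprS; move: pow_gt0 b_le.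
set P := (2 : R) ^+ n; nra.
Qed.

End HalvingGap.

Lemma exists_le_pow2 {R : archiRealFieldType} (d e : R) :
  0 < e -> exists m : nat, d <= e * 2 ^+ m.
Proof.
move=> e_gt0; exists (Num.truncn (d / e)).+1.
have d_lt : d / e < (Num.truncn (d / e)).+1%:R by exact: truncnS_gt.
have le_pow : (Num.truncn (d / e)).+1%:R <= (2 : R) ^+ (Num.truncn (d / e)).+1.
  by rewrite -natrX ler_nat ltnW // ltn_expl.
by rewrite -ler_pdivrMl // mulrC ltW // (lt_le_trans d_lt le_pow).
Qed.

Section ExtendedHalves.
Context {R : realFieldType}.
Local Open Scope ereal_scope.

Lemma EFinB_le_swap (a : R) (b c : \bar R) : a%:E - b <= c -> a%:E - c <= b.
Proof.
case: b => [b| |]; case: c => [c| |] //=; rewrite ?leey ?leNye //.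
by rewrite -!EFinB !lee_fin => ?; lra.
Qed.

Lemma mul_half_pinfty : (2^-1 : R)%:E * +oo = +oo.
Proof. by rewrite mulry gtr0_sg ?invr_gt0 // mul1e. Qed.

Lemma halfeD_le (a b : \bar R) : b <= a -> (2^-1)%:E * (a + b) <= a.
Proof.
case: a => [a| |]; case: b => [b| |] //; rewrite ?leey //.
- by rewrite -EFinD -EFinM !lee_fin => ?; lra.
- by rewrite addeNy mulrNy gtr0_sg ?invr_gt0 // mul1e.
- by rewrite mulrNy gtr0_sg ?invr_gt0 // mul1e.
Qed.

Lemma EFinB_halfeD_le (a : R) (u v U V : \bar R) :
  -oo < u -> -oo < v -> -oo < U -> -oo < V ->
  a%:E - u <= V -> a%:E - v <= U ->
  a%:E - (2^-1)%:E * (u + v) <= (2^-1)%:E * (U + V).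
Proof.
case: u => [u| |] // _; last first.
  move=> v_gtNy _ _ _ _.
  by rewrite addye ?gt_eqF // mul_half_pinfty addeNy leNye.
case: v => [v| |] // _; last first.
  by move=> _ _ _ _; rewrite addey // mul_half_pinfty addeNy leNye.
case: U => [U| |] // _; last first.
  by move=> V_gtNy _ _; rewrite addye ?gt_eqF // mul_half_pinfty leey.
case: V => [V| |] // _; last by move=> _ _; rewrite addey // mul_half_pinfty leey.
by rewrite -?EFinB -!EFinD -!EFinM -?EFinB !lee_fin => ? ?; lra.
Qed.

End ExtendedHalves.

Section Conjugate.
Context {R : realType} {X : normedModType R}.
Local Open Scope ereal_scope.
Implicit Types g : X -> (X -> R) -> \bar R.

Lemma conj_i_ub g y k x f : is_dual f ->
  (k x + f y)%:E - g x f <= conj_i g y k.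
Proof. by move=> f_dual; apply: ereal_sup_ubound; exists x, f. Qed.

Lemma conj_i_le g y k M :
  (forall x f, is_dual f -> (k x + f y)%:E - g x f <= M) -> conj_i g y k <= M.
Proof. by move=> ubM; apply: ge_ereal_sup => _ [x [f [f_dual ->]]]; exact: ubM. Qed.

Lemma conj_i_anti g1 g2 :
  (forall x f, is_dual f -> g1 x f <= g2 x f) ->
  forall y k, conj_i g2 y k <= conj_i g1 y k.
Proof.
move=> g12 y k; apply: conj_i_le => x f f_dual.
by apply: le_trans (conj_i_ub _ _ _ _ _ f_dual); apply: leeB => //; exact: g12.
Qed.

Lemma conj_i_conj_i_le g y k : is_dual k -> conj_i (conj_i g) y k <= g y k.
Proof.
move=> k_dual; apply: conj_i_le => x f f_dual; apply: EFinB_le_swap.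
by rewrite (addrC (k x)); exact: conj_i_ub.
Qed.

End Conjugate.

Section IterateA.
Context {R : realType} {X : normedModType R}.
Variable h : X -> (X -> R) -> \bar R.
Local Open Scope ereal_scope.

Hypothesis conj_h_gtNy : forall x f, is_dual f -> -oo < conj_i h x f.
Hypothesis conj_h_le : forall x f, is_dual f -> conj_i h x f <= h x f.

Let hn n := iter n opA h.

Lemma iter_opA_conj_le n x f : is_dual f ->
  conj_i (hn n) x f <= hn n x f /\ hn n x f <= h x f.
Proof.
elim: n x f => [|n IHn] x f f_dual; first by split => //; exact: conj_h_le.
have conj_ge y k : is_dual k -> conj_i h y k <= conj_i (hn n) y k.
  by move=> _; apply: conj_i_anti => y0 k0 k0_dual; case: (IHn y0 k0 k0_dual).
have gtNy y k : is_dual k ->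
    -oo < conj_i (hn n) y k /\ -oo < hn n y k.
  move=> k_dual; have [conj_le _] := IHn y k k_dual.
  have conj_gtNy := lt_le_trans (conj_h_gtNy y k k_dual) (conj_ge y k k_dual).
  by split; last exact: lt_le_trans conj_le.
have [conj_le le_h] := IHn x f f_dual.
split; last by apply: le_trans le_h; exact: halfeD_le.
apply: conj_i_le => y k k_dual; rewrite /hn /= /opA -/(hn n).
have [gtNy_conj_y gtNy_y] := gtNy y k k_dual.
have [gtNy_conj_x gtNy_x] := gtNy x f f_dual.
apply: EFinB_halfeD_le => //; first exact: conj_i_ub.
by apply: EFinB_le_swap; rewrite (addrC (f y)); exact: conj_i_ub.
Qed.

Lemma iter_opA_nonincr x f : is_dual f ->
  nonincreasing_seq (fun n => hn n x f).
Proof.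
move=> f_dual; apply/nonincreasing_seqP => n; rewrite /hn /= /opA -/(hn n).
exact: halfeD_le (proj1 (iter_opA_conj_le n x f f_dual)).
Qed.

Lemma conj_iter_opA_nondecr y k : nondecreasing_seq (fun n => conj_i (hn n) y k).
Proof.
by move=> m n le_mn; apply: conj_i_anti => x f f_dual; exact: iter_opA_nonincr.
Qed.

Lemma opAinf_le_iter_opA n x f : is_dual f -> opAinf h x f <= hn n x f.
Proof.
move=> f_dual; apply: le_trans (iter_opA_nonincr x f f_dual _ _ (leqnSn n)).
by apply: ereal_inf_lbound; exists n.
Qed.

Lemma conj_iter_opA_le_opAinf m x f : is_dual f -> conj_i (hn m) x f <= opAinf h x f.
Proof.
move=> f_dual; apply: le_ereal_inf_tmp => _ [n _ <-].
apply: le_trans (conj_iter_opA_nondecr x f _ _ (leq_maxl m n.+1)) _.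
apply: le_trans (proj1 (iter_opA_conj_le _ x f f_dual)) _.
exact: iter_opA_nonincr x f f_dual _ _ (leq_maxr m n.+1).
Qed.

Lemma conj_opAinf_le y k : is_dual k -> conj_i (opAinf h) y k <= opAinf h y k.
Proof.
move=> k_dual; apply: le_ereal_inf_tmp => _ [n _ <-].
apply: le_trans (conj_i_conj_i_le (hn n.+1) y k k_dual).
by apply: conj_i_anti => x f f_dual; exact: conj_iter_opA_le_opAinf.
Qed.

Lemma iter_opA_fin_num n x f : is_dual f -> h x f < +oo ->
  hn n x f \is a fin_num /\ conj_i (hn n) x f \is a fin_num.
Proof.
move=> f_dual h_lty; have [conj_le le_h] := iter_opA_conj_le n x f f_dual.
have conj_ge : conj_i h x f <= conj_i (hn n) x f.
  exact: (conj_iter_opA_nondecr x f _ _ (leq0n n)).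
have gtNy := lt_le_trans (conj_h_gtNy x f f_dual) conj_ge.
have ltey := le_lt_trans le_h h_lty.
rewrite !fin_numElt gtNy ltey (lt_le_trans gtNy conj_le).
by rewrite (le_lt_trans conj_le ltey).
Qed.

Lemma opAinf_le_conj_fin x f : is_dual f -> h x f < +oo ->
  opAinf h x f <= conj_i (opAinf h) x f.
Proof.
move=> f_dual h_lty.
pose a n := fine (hn n x f); pose b n := fine (conj_i (hn n) x f).
have aE n : hn n x f = (a n)%:E.
  by rewrite fineK //; case: (iter_opA_fin_num n x f f_dual h_lty).
have bE n : conj_i (hn n) x f = (b n)%:E.
  by rewrite fineK //; case: (iter_opA_fin_num n x f f_dual h_lty).
have a_rec n : a n.+1 = (2^-1 * (a n + b n))%R.
  by apply: EFin_inj; rewrite -aE EFinM EFinD -aE -bE.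
have b_nondecr : nondecreasing_seq b.
  by move=> m n le_mn; rewrite -lee_fin -!bE; exact: conj_iter_opA_nondecr.
have b_le n : (b n)%:E <= conj_i (opAinf h) x f.
  by rewrite -bE; apply: conj_i_anti => y k k_dual; exact: opAinf_le_iter_opA.
apply/lee_addgt0Pr => e e_gt0.
have [m gap_le] := exists_le_pow2 (a 0%N - b 0%N)%R e e_gt0.
have gap_m : (a m - b m <= e)%R.
  have pow_gt0 : (0 < (2 : R) ^+ m)%R by exact: exprn_gt0.
  rewrite -(ler_pM2r pow_gt0).
  exact: le_trans (halving_gap_le a_rec b_nondecr m) gap_le.
apply: le_trans (opAinf_le_iter_opA m x f f_dual) _.
rewrite aE; apply: le_trans (leeD2r _ (b_le m)); rewrite -EFinD lee_fin.
by rewrite -lerBlDl.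
Qed.

Lemma opAinf_le_conj x f : is_dual f -> (h x f = +oo -> conj_i h x f = +oo) ->
  opAinf h x f <= conj_i (opAinf h) x f.
Proof.
move=> f_dual h_dom; have [h_lty|] := ltP (h x f) +oo.
  exact: opAinf_le_conj_fin.
rewrite leye_eq => /eqP /h_dom conj_h_pinfty.
have : conj_i h x f <= conj_i (opAinf h) x f.
  by apply: conj_i_anti => y k k_dual; exact: (opAinf_le_iter_opA 0).
by rewrite conj_h_pinfty leye_eq => /eqP ->; exact: leey.
Qed.

End IterateA.

Lemma max_monotone_graph_nonempty {R : realType} {X : normedModType R}
    {T : X -> set (X -> R)} :
  max_monotone T -> exists x0 f0, T x0 f0.
Proof.
move=> [T_mono T_max]; apply: contrapT => T_empty.
pose S (x : X) := [set g : X -> R | x = 0 /\ g = (fun _ => 0)].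
have S_mono : monotone_op S.
  split.
    by move=> x g [_ ->]; split=> [a y z|]; [rewrite mulr0 addr0 | exact: cst_continuous].
  by move=> x y g1 g2 [_ ->] [_ ->]; rewrite !subr0 addr0.
have TS x : T x `<=` S x by move=> g Tg; exfalso; apply: T_empty; exists x, g.
by apply: T_empty; exists 0, (fun _ => 0); rewrite -(T_max S S_mono TS).
Qed.

Theorem corollary2p1 (R : realType) (X : completeNormedModType R)
  (h : X -> (X -> R) -> \bar R) :
  @reflexive_space R X ->
  in_H h ->
  (forall (x : X) (f : X -> R), is_dual f -> (conj_i h x f <= h x f)%E) ->
  (forall (x : X) (f : X -> R), is_dual f ->
     ((h x f < +oo)%E <-> (conj_i h x f < +oo)%E)) ->
  forall (x : X) (f : X -> R), is_dual f ->
    conj_i (opAinf h) x f = opAinf h x f.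
Proof.
move=> _ [T [T_max [_ [_ [_ h_graph]]]]] conj_h_le h_dom x f f_dual.
have [x0 [f0 T_x0f0]] := max_monotone_graph_nonempty T_max.
have f0_dual : is_dual f0 by case: T_max => [[T_op _] _]; exact: T_op T_x0f0.
have conj_h_gtNy y k : is_dual k -> (-oo < conj_i h y k)%E.
  move=> _; apply: lt_le_trans (conj_i_ub h y k x0 f0 f0_dual).
  by rewrite h_graph // -EFinB ltNyr.
have conj_h_pinfty : h x f = +oo%E -> conj_i h x f = +oo%E.
  move=> h_pinfty; apply/eqP; rewrite -leye_eq leNgt; apply/negP.
  by move/(proj2 (h_dom x f f_dual)); rewrite h_pinfty ltxx.
apply/le_anti/andP; split; first exact: conj_opAinf_le.
exact: opAinf_le_conj.
Qed.
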